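(* Let $k$ be a field of characteristic zero, $S=k[x,y]$, let $a,b$ be positive integers and $J=(x^a,y^b)\subset S$, and let $I$ be a monomial ideal of $S$ with $J\subset I$. Then the graded $S$-module $I/J$ has the strong Lefschetz property.
   Context: $S$ is standard graded. A finite graded $S$-module $M=\bigoplus_i M_i$ has the strong Lefschetz property if there exists a linear form $\ell\in S_1$ such that the multiplication map $\times\ell^d\colon M_i\to M_{i+d}$ has maximal rank (is injective or surjective) for all $d>0$ and all $i$. *)

From HB Require Import structures.
From mathcomp Require Import all_boot all_order all_algebra.
From mathcomp Require Import mpoly.
Set Implicit Arguments.
Unset Strict Implicit.
Unset Printing Implicit Defensive.
Import GRing.Theory.
Local Open Scope ring_scope.

Definition monomial_ideal_gen (k : fieldType) (n : nat)
    (E : 'X_{1..n} -> Prop) (p : {mpoly k[n]}) : Prop :=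
  exists s : seq ('X_{1..n} * {mpoly k[n]}),
    (forall x, x \in s -> E x.1) /\ p = \sum_(x <- s) x.2 * 'X_[x.1].

Definition is_monomial_ideal (k : fieldType) (n : nat)
    (I : {mpoly k[n]} -> Prop) : Prop :=
  exists E : 'X_{1..n} -> Prop, forall p, I p <-> monomial_ideal_gen E p.

Definition varx (k : fieldType) : {mpoly k[2]} := 'X_(ord0 : 'I_2).
Definition vary (k : fieldType) : {mpoly k[2]} := 'X_(ord_max : 'I_2).

Definition idealJ (k : fieldType) (a b : nat) (p : {mpoly k[2]}) : Prop :=
  exists u v : {mpoly k[2]}, p = u * varx k ^+ a + v * vary k ^+ b.

(* For homogeneous ideals J ⊆ I of S, the graded module M = I/J has
   M_i = I_i / J_i (I_i = homogeneous elements of degree i in I).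
   The map  x l^d : M_i -> M_{i+d},  [f] |-> [l^d f],  is
   - injective  iff  for f in I_i,  l^d f in J  implies  f in J;
   - surjective iff  every g in I_{i+d} is congruent mod J to l^d f
     for some f in I_i. *)
Definition mul_injective (k : fieldType) (n : nat)
    (I J : {mpoly k[n]} -> Prop) (l : {mpoly k[n]}) (d i : nat) : Prop :=
  forall f : {mpoly k[n]}, I f -> f \is i.-homog -> J (l ^+ d * f) -> J f.

Definition mul_surjective (k : fieldType) (n : nat)
    (I J : {mpoly k[n]} -> Prop) (l : {mpoly k[n]}) (d i : nat) : Prop :=
  forall g : {mpoly k[n]}, I g -> g \is (i + d)%N.-homog ->
    exists f : {mpoly k[n]},
      [/\ I f, f \is i.-homog & J (g - l ^+ d * f)].

Definition quot_has_SLP (k : fieldType) (n : nat)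
    (I J : {mpoly k[n]} -> Prop) : Prop :=
  exists l : {mpoly k[n]}, l \is 1.-homog /\
    forall d i : nat, (0 < d)%N ->
      mul_injective I J l d i \/ mul_surjective I J l d i.

(* The classes of the monomials x^p y^(n-p) in I but not in J
   form a basis of (I/J)_n, and the monomials x^c y^(n+d-c) outside J form a basis of (S/J)_(n+d),
   with c running over an interval.  In these bases multiplication by (x + y)^d has the matrix of
   binomial coefficients C(d, c - p).  Any square submatrix with increasing rows p_i and columns
   c_i such that p_i <= c_i <= p_i + d has a positive determinant: Pascal's rule writes it as a sum
   of determinants of the same shape for d - 1, all nonnegative and one of them positive (this is
   the Lindstrom-Gessel-Viennot positivity of lattice path counts).  Such submatrices exist of size
   min(dim (I/J)_n, dim (S/J)_(n+d)), so in characteristic zero the map (I/J)_n -> (S/J)_(n+d) has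
   maximal rank; since (I/J)_(n+d) sits inside (S/J)_(n+d), multiplication by (x + y)^d on I/J is
   injective or surjective. *)

From HB Require Import structures.
From mathcomp Require Import all_boot all_order all_algebra all_fingroup.
From mathcomp Require Import zify.
From mathcomp Require Import mpoly.
From mathcomp Require Import boolp.
Set Implicit Arguments. Unset Strict Implicit. Unset Printing Implicit Defensive.
Import Order.TTheory GRing.Theory Num.Theory.
Local Open Scope ring_scope.

Definition binz (d : nat) (z : int) : nat := if z is Posz k then 'C(d, k) else 0.

Lemma binz0 z : binz 0 z = (z == 0).
Proof. by case: z => [[|k]|k]. Qed.

Lemma binzS d z : binz d.+1 z = (binz d z + binz d (z - 1))%N.
Proof.
case: z => [[|k]|k] //=; first by rewrite !bin0.
by rewrite subn1 binS addnC.
Qed.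

Lemma binz_lt0 d z : z < 0 -> binz d z = 0%N.
Proof. by case: z. Qed.

Lemma binz_gt d z : (d%:Z < z) -> binz d z = 0%N.
Proof. by case: z => // k; rewrite ltz_nat => /bin_small. Qed.

Lemma perm_homo_lt_id m (s : 'S_m) : {homo s : i j / (i < j)%O} -> s = 1%g.
Proof.
move=> s_incr; apply/permP => i; rewrite perm1.
by apply: (Order.mono_unique (@le_total _ _) (leqnn _) (le_mono s_incr)).
Qed.

(* Entry (i, j) is the coefficient of x^(C i) in x^(R j) (1 + x)^d. *)
Definition pascal_mx (F : pzRingType) m n d (R : 'I_m -> int) (C : 'I_n -> int) : 'M[F]_(n, m) :=
  \matrix_(i, j) (binz d (C i - R j))%:R.

Lemma det_add_rowwise (F : comPzRingType) m (A B : 'M[F]_m) :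
  \det (A + B) = \sum_(phi : {ffun 'I_m -> bool})
                   \det (\matrix_(i, j) if phi i then B i j else A i j).
Proof.
rewrite /determinant.
transitivity (\sum_(s : 'S_m) \sum_(phi : {ffun 'I_m -> bool})
   (-1) ^+ s * \prod_i (if phi i then B i (s i) else A i (s i))).
  apply: eq_bigr => s _; rewrite -mulr_sumr; congr (_ * _).
  rewrite (eq_bigr (fun i => \sum_(b : bool) if b then B i (s i) else A i (s i))).
    by rewrite bigA_distr_bigA.
  by move=> i _; rewrite big_bool mxE addrC.
rewrite exchange_big; apply: eq_bigr => phi _; apply: eq_bigr => s _.
by congr (_ * _); apply: eq_bigr => i _; rewrite mxE.
Qed.

Section PascalDeterminant.
Variables (F : comPzRingType) (m : nat) (R : 'I_m -> int).

Lemma det_pascalS d C : \det (pascal_mx F d.+1 R C) =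
  \sum_(phi : {ffun 'I_m -> bool}) \det (pascal_mx F d R (fun i => C i - (phi i)%:Z)).
Proof.
have -> : pascal_mx F d.+1 R C = pascal_mx F d R C + pascal_mx F d R (fun i => C i - 1).
  by apply/matrixP => i j; rewrite !mxE binzS natrD addrAC.
rewrite det_add_rowwise; apply: eq_bigr => phi _; congr (\det _).
by apply/matrixP => i j; rewrite !mxE; case: (phi i); rewrite ?subr0.
Qed.

Lemma det_pascal_tie d C i1 i2 : i1 != i2 -> C i1 = C i2 -> \det (pascal_mx F d R C) = 0.
Proof. by move=> ne eqC; apply: (determinant_alternate ne) => j; rewrite !mxE eqC. Qed.

Hypothesis R_incr : {homo R : i j / (i < j)%O}.

Lemma det_pascal0 C : {homo C : i j / (i < j)%O} ->
  \det (pascal_mx F 0 R C) = [forall i, C i == R i]%:R.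
Proof.
move=> C_incr; rewrite /determinant (bigD1 1%g) //= [X in _ + X]big1 => [|s s_ne1].
  rewrite addr0 odd_perm1 expr0 mul1r.
  case: (boolP [forall i, C i == R i]) => [/forallP eqCR | /forallPn [i neCR]].
    by apply: big1 => i _; rewrite !mxE perm1 binz0 subr_eq0 eqCR.
  by rewrite (bigD1 i) //= !mxE perm1 binz0 subr_eq0 (negbTE neCR) mul0r.
case: (boolP [forall i, C i == R (s i)]) => [/forallP eqCRs | /forallPn [i neCRs]].
  suff : s = 1%g by move/eqP: s_ne1.
  apply: perm_homo_lt_id => i j lt_ij.
  by rewrite -(leW_mono (le_mono R_incr)) -!(eqP (eqCRs _)); apply: C_incr.
by rewrite (bigD1 i) //= !mxE binz0 subr_eq0 (negbTE neCRs) mul0r mulr0.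
Qed.

End PascalDeterminant.

Section PascalPositivity.
Variables (F : numDomainType) (m : nat) (R : 'I_m -> int).
Hypothesis R_incr : {homo R : i j / (i < j)%O}.

(* Ties in C are allowed so that the statement is stable under the shifts of det_pascalS. *)
Lemma det_pascal_ge0 d C : {homo C : i j / (i <= j)%O} -> 0 <= \det (pascal_mx F d R C).
Proof.
elim: d C => [|d IH] C C_mono.
all: have [/injectiveP C_inj | /injectivePn [i1 [i2 ne eqC]]] := boolP (injectiveb C);
  last by rewrite (det_pascal_tie _ R _ ne eqC).
all: have C_incr := inj_homo_lt C_inj C_mono.
  by rewrite det_pascal0 // ler0n.
rewrite det_pascalS; apply: sumr_ge0 => phi _; apply: IH => i j.
rewrite le_eqVlt => /predU1P [-> // | /C_incr].
by case: (phi i); case: (phi j) => /=; lia.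
Qed.

Lemma det_pascal_gt0 d C : {homo C : i j / (i < j)%O} ->
  (forall i, R i <= C i <= R i + d%:Z) -> 0 < \det (pascal_mx F d R C).
Proof.
elim: d C => [|d IH] C C_incr C_bnd.
  have eqCR : [forall i, C i == R i].
    by apply/forallP => i; have := C_bnd i; rewrite addr0 -eq_le eq_sym.
  by rewrite det_pascal0 // eqCR ltr01.
pose phi0 := [ffun i => R i < C i].
have phi0E i : (phi0 i)%:Z = if R i < C i then 1 else 0 by rewrite ffunE; case: ifP.
rewrite det_pascalS (bigD1 phi0) //=; apply: ltr_wpDr.
  apply: sumr_ge0 => phi _; apply: det_pascal_ge0 => i j.
  rewrite le_eqVlt => /predU1P [-> // | /C_incr].
  by case: (phi i); case: (phi j) => /=; lia.
apply: IH => [i j lt_ij | i]; rewrite !phi0E; have := C_bnd i.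
  have := C_bnd j; have := C_incr _ _ lt_ij; have := R_incr lt_ij.
  by case: ifP; case: ifP; lia.
by case: ifP; lia.
Qed.

End PascalPositivity.

Lemma pascal_mx_unit (F : fieldType) m d (R C : 'I_m -> int) : [pchar F] =i pred0 ->
    {homo R : i j / (i < j)%O} -> {homo C : i j / (i < j)%O} ->
  (forall i, R i <= C i <= R i + d%:Z) -> pascal_mx F d R C \in unitmx.
Proof.
move=> F0 R_incr C_incr C_bnd.
have det_gt0 := det_pascal_gt0 int R_incr C_incr C_bnd.
have -> : pascal_mx F d R C = map_mx intr (pascal_mx int d R C).
  by apply/matrixP => i j; rewrite !mxE natz.
rewrite unitmxE det_map_mx unitfE -[\det _]gez0_abs ?ltW // -natz.
by rewrite rmorph_nat ((pcharf0P _).1 F0) absz_eq0 gt_eqF.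
Qed.

Lemma pascal_mx_rank (F : fieldType) m n d lo (R : 'I_m -> nat) : [pchar F] =i pred0 ->
    {homo R : i j / (i < j)%N} ->
    (forall i : 'I_m, lo + i <= R i + d)%N -> (forall i : 'I_m, R i + (m - i) <= lo + n)%N ->
  \rank (pascal_mx F d (fun i => (R i)%:Z) (fun j : 'I_n => (lo + j)%:Z)) = minn n m.
Proof.
move=> F0 R_incr R_lo R_hi; set A := pascal_mx _ _ _ _.
(* A unit square submatrix: the rows max (R i) (lo + i) if m <= n, else the last n columns. *)
case: (leqP m n) => [le_mn | lt_nm]; apply/eqP.
  rewrite eqn_leq rank_leq_col /=.
  have f_lt i : (maxn (R i) (lo + i) - lo < n)%N by have := R_hi i; have := ltn_ord i; lia.
  pose f i := Ordinal (f_lt i).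
  have /mxrank_unit {1}<- : rowsub f A \in unitmx.
    have -> : rowsub f A = pascal_mx F d (fun i => (R i)%:Z) (fun i => (maxn (R i) (lo + i))%:Z).
      by apply/matrixP => i j; rewrite !mxE /= subnKC // leq_max leq_addr orbT.
    apply: pascal_mx_unit => // [i j lt_ij | i]; last by have := R_lo i; lia.
    by move: lt_ij; rewrite ltz_nat ltEord => /[dup] /R_incr; lia.
  exact: mxrankS (rowsub_sub _ _).
rewrite eqn_leq rank_leq_row /=.
have g_lt (j : 'I_n) : (m - n + j < m)%N by have := ltn_ord j; lia.
pose g j := Ordinal (g_lt j).
have /mxrank_unit {1}<- : colsub g A \in unitmx.
  have -> : colsub g A = pascal_mx F d (fun j => (R (g j))%:Z) (fun j : 'I_n => (lo + j)%:Z).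
    by apply/matrixP => i j; rewrite !mxE.
  apply: pascal_mx_unit => // [i j lt_ij | i j lt_ij | j]; rewrite ?ltz_nat.
  - by apply: R_incr; rewrite /= ltn_add2l.
  - by move: lt_ij; rewrite ltEord; lia.
  - by have := R_lo (g j); have := R_hi (g j); rewrite /=; lia.
by rewrite -[A in colsub _ A]mulmx1 -mulmx_colsub mxrankM_maxl.
Qed.

Lemma mcoeffMX_cond (R : nzRingType) n (p : {mpoly R[n]}) u m :
  (p * 'X_[u])@_m = if (u <= m)%MM then p@_(m - u) else 0.
Proof.
case: ifP => le_um; first by rewrite -{1}(submK le_um) addmC mcoeffMX.
apply: memN_msupp_eq0; rewrite (perm_mem (msuppMX p u)).
by apply/mapP => -[m' _ eq_m]; move: le_um; rewrite eq_m lem_addr.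
Qed.

Lemma mnm_lepUn n (i : 'I_n) c (m : 'X_{1..n}) : (U_(i) *+ c <= m)%MM = (c <= m i)%N.
Proof.
apply/mnm_lepP/idP => [/(_ i) | le_c j]; rewrite mulmnE mnm1E ?eqxx ?mul1n //.
by case: eqVneq => [<- | _]; rewrite ?mul1n ?mul0n.
Qed.

Section TwoVariables.
Variable k : fieldType.

Definition mxy (c e : nat) : 'X_{1..2} := [multinom (if i == ord0 then c else e) | i < 2].

Lemma mxy0 c e : mxy c e ord0 = c. Proof. by rewrite mnmE. Qed.
Lemma mxy1 c e : mxy c e ord_max = e. Proof. by rewrite mnmE. Qed.

Lemma ord2P (i : 'I_2) : i = ord0 \/ i = ord_max.
Proof. by case: i => [[|[|//]]] lt_i2; [left | right]; apply: val_inj. Qed.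

Lemma mxyE (m : 'X_{1..2}) : m = mxy (m ord0) (m ord_max).
Proof. by apply/mnmP => i; case: (ord2P i) => ->; rewrite ?mxy0 ?mxy1. Qed.

Lemma mdeg_mxy c e : mdeg (mxy c e) = (c + e)%N.
Proof. by rewrite mdegE big_ord_recr big_ord1 /= !mnmE. Qed.

Lemma mcoeff_varxM (g : {mpoly k[2]}) c e :
  (varx k * g)@_(mxy c e) = if c is c'.+1 then g@_(mxy c' e) else 0.
Proof.
rewrite mulrC mcoeffMX_cond lep1mP mxy0; case: c => // c; congr (g@__).
by apply/mnmP => i; rewrite mnmBE mnm1E; case: (ord2P i) => ->; rewrite !mnmE //= ?subn0 ?subn1.
Qed.

Lemma mcoeff_varyM (g : {mpoly k[2]}) c e :
  (vary k * g)@_(mxy c e) = if e is e'.+1 then g@_(mxy c e') else 0.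
Proof.
rewrite mulrC mcoeffMX_cond lep1mP mxy1; case: e => // e; congr (g@__).
by apply/mnmP => i; rewrite mnmBE mnm1E; case: (ord2P i) => ->; rewrite !mnmE //= ?subn0 ?subn1.
Qed.

Definition xpy : {mpoly k[2]} := varx k + vary k.

Lemma xpy_homog : xpy \is 1.-homog.
Proof. by apply: rpredD; rewrite dhomogX /= mdeg1. Qed.

Lemma mcoeff_xpyXM d n (f : {mpoly k[2]}) c e : f \is n.-homog -> (c + e = n + d)%N ->
  (xpy ^+ d * f)@_(mxy c e) = \sum_(p < n.+1) (binz d (c%:Z - p%:Z))%:R * f@_(mxy p (n - p)).
Proof.
move=> f_homog; elim: d c e => [|d IH] c e.
  rewrite addn0 => ce_n; have lt_cn : (c < n.+1)%N by rewrite ltnS -ce_n leq_addr.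
  rewrite mul1r (bigD1 (Ordinal lt_cn)) //=.
  rewrite binz0 subrr mul1r big1 ?addr0 => [|p ne_pc]; first by rewrite -ce_n addKn.
  rewrite binz0 subr_eq0 eqz_nat; case: eqP => [eq_cp | _]; last by rewrite mul0r.
  by move: ne_pc; rewrite (_ : p = Ordinal lt_cn) ?eqxx //; apply: val_inj.
move=> ce_nd; rewrite exprS -mulrA mulrDl mcoeffD mcoeff_varxM mcoeff_varyM addrC.
under eq_bigr do rewrite binzS natrD mulrDl.
rewrite big_split /=; congr (_ + _).
  case: e ce_nd => [|e] ce_nd; last by rewrite IH //; lia.
  by rewrite big1 // => p _; rewrite binz_gt ?mul0r //; have := ltn_ord p; lia.
case: c ce_nd => [|c] ce_nd.
  by rewrite big1 // => p _; rewrite binz_lt0 ?mul0r //; lia.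
rewrite IH; last by lia.
by apply: eq_bigr => p _; congr ((binz d _)%:R * _); lia.
Qed.

Lemma xpyXM_homog d n (f : {mpoly k[2]}) : f \is n.-homog -> xpy ^+ d * f \is (n + d).-homog.
Proof. by rewrite addnC; apply: dhomogM; have := dhomogMn d xpy_homog; rewrite mul1n. Qed.

Lemma mdeg2E (m : 'X_{1..2}) : mdeg m = (m ord0 + m ord_max)%N.
Proof. by rewrite {1}(mxyE m) mdeg_mxy. Qed.

Section IdealJ.
Variables a b : nat.

Lemma idealJP (p : {mpoly k[2]}) :
  idealJ a b p <-> forall m : 'X_{1..2}, (m ord0 < a)%N -> (m ord_max < b)%N -> p@_m = 0.
Proof.
split=> [[u [v ->]] m lt_a lt_b | p0].
  rewrite mcoeffD /varx /vary !mpolyXn !mcoeffMX_cond !mnm_lepUn.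
  by rewrite leqNgt lt_a leqNgt lt_b addr0.
exists (\sum_(m <- msupp p | (a <= m ord0)%N) p@_m *: 'X_[m - U_(ord0) *+ a]).
exists (\sum_(m <- msupp p | ~~ (a <= m ord0)%N) p@_m *: 'X_[m - U_(ord_max) *+ b]).
rewrite {1}[p]mpolyE (bigID (fun m : 'X_{1..2} => (a <= m ord0)%N)) /=.
rewrite /varx /vary !mpolyXn !mulr_suml.
congr (_ + _); rewrite big_seq_cond [RHS]big_seq_cond; apply: eq_bigr => m /andP [m_supp le_a];
  rewrite -scalerAl -mpolyXD submK // mnm_lepUn //.
move: m_supp; rewrite mcoeff_msupp; apply: contraR; rewrite -ltnNge => lt_b.
by apply/eqP; apply: p0; rewrite // ltnNge.
Qed.

(* The monomials of degree e outside J are the x^c y^(e-c) with stdJ_lo e <= c < stdJ_lo e + stdJ_dim e. *)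
Definition stdJ_lo e := (e.+1 - b)%N.
Definition stdJ_dim e := (minn a e.+1 - stdJ_lo e)%N.

Lemma idealJ_homogP e (h : {mpoly k[2]}) : h \is e.-homog -> idealJ a b h <->
  forall j : 'I_(stdJ_dim e), h@_(mxy (stdJ_lo e + j) (e - (stdJ_lo e + j))) = 0.
Proof.
move=> h_homog; rewrite idealJP /stdJ_dim /stdJ_lo.
split=> [hJ j | h0 m lt_a lt_b]; first by apply: hJ; rewrite ?mxy0 ?mxy1; have := ltn_ord j; lia.
case: (eqVneq (mdeg m) e) => [deg_m | ?]; last exact: dhomog_nemf_coeff h_homog _.
rewrite mdeg2E in deg_m.
have lt_j : (m ord0 - (e.+1 - b) < minn a e.+1 - (e.+1 - b))%N by lia.
pose j := Ordinal lt_j.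
have -> : m = mxy (e.+1 - b + j) (e - (e.+1 - b + j)) by rewrite [LHS]mxyE /=; congr mxy; lia.
exact: h0.
Qed.

End IdealJ.

End TwoVariables.

Section MonomialIdeal.
Variables (k : fieldType) (n : nat) (E : 'X_{1..n} -> Prop).

Lemma monomial_ideal_gen0 : monomial_ideal_gen E (0 : {mpoly k[n]}).
Proof. by exists [::]; split => //; rewrite big_nil. Qed.

Lemma monomial_ideal_genD (p q : {mpoly k[n]}) :
  monomial_ideal_gen E p -> monomial_ideal_gen E q -> monomial_ideal_gen E (p + q).
Proof.
case=> s1 [s1E ->] [s2 [s2E ->]]; exists (s1 ++ s2); split; last by rewrite big_cat.
by move=> x; rewrite mem_cat => /orP [/s1E | /s2E].
Qed.

Lemma monomial_ideal_genM (r p : {mpoly k[n]}) :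
  monomial_ideal_gen E p -> monomial_ideal_gen E (r * p).
Proof.
case=> s [sE ->]; exists [seq (x.1, r * x.2) | x <- s]; split.
  by move=> x /mapP [y y_s ->]; exact: (sE y y_s).
by rewrite big_map mulr_sumr; apply: eq_bigr => x _; rewrite mulrA.
Qed.

Lemma monomial_ideal_gen_supp (p : {mpoly k[n]}) m :
  monomial_ideal_gen E p -> m \in msupp p -> monomial_ideal_gen E ('X_[m] : {mpoly k[n]}).
Proof.
case=> s [sE ->]; rewrite mcoeff_msupp raddf_sum => m_supp.
have [x x_s] : exists2 x, x \in s & (x.2 * 'X_[x.1])@_m != 0.
  apply/hasP; apply: contraNT m_supp => /hasPn s0.
  by rewrite big1_seq // => x /andP [_ /s0 /negPn /eqP].
rewrite mcoeffMX_cond; case: ifP => [le_m _ | _]; last by rewrite eqxx.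
exists [:: (x.1, 'X_[m - x.1])]; split; first by move=> y; rewrite inE => /eqP -> /=; apply: sE.
by rewrite big_seq1 /= -mpolyXD submK.
Qed.

End MonomialIdeal.

Section MonomialIdealTheory.
Variables (k : fieldType) (n : nat) (I : {mpoly k[n]} -> Prop).
Hypothesis I_mono : is_monomial_ideal I.

Lemma monomial_ideal_supp (p : {mpoly k[n]}) m : I p -> m \in msupp p -> I 'X_[m].
Proof. by case: I_mono => E IE /IE p_gen /(monomial_ideal_gen_supp p_gen) /IE. Qed.

Lemma monomial_ideal_lincomb (T : Type) (r : seq T) (c : T -> k) (q : T -> {mpoly k[n]}) :
  (forall x, I (q x)) -> I (\sum_(x <- r) c x *: q x).
Proof.
case: I_mono => E IE Iq; apply/IE; apply: big_ind => [|p1 p2|x _].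
- exact: monomial_ideal_gen0.
- exact: monomial_ideal_genD.
- by rewrite -mul_mpolyC; apply/monomial_ideal_genM/IE.
Qed.

End MonomialIdealTheory.

Lemma sorted_ltn_nth_bounds (s : seq nat) lo hi i :
    sorted ltn s -> all (fun p => lo <= p < hi)%N s -> (i < size s)%N ->
  (lo + i <= nth 0 s i)%N /\ (nth 0 s i + (size s - i) <= hi)%N.
Proof.
elim: s lo i => [//|x s IH] lo i /= x_s /andP [/andP [lo_x x_hi] s_in].
have s_in' : all (fun p => x.+1 <= p < hi)%N s.
  apply/allP => p p_s; have /allP/(_ p p_s) := order_path_min ltn_trans x_s.
  by have /allP/(_ p p_s) := s_in; rewrite /=; lia.
have {}IH := IH _ _ (path_sorted x_s) s_in'.
case: i => [_ | i /IH] /=; last by lia.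
case: s {x_s s_in s_in'} IH => [_ | y s] /=; first by lia.
by case/(_ 0%N isT); lia.
Qed.

Section GradedPiece.
Variables (k : fieldType) (a b : nat) (I : {mpoly k[2]} -> Prop) (n : nat).
Hypothesis I_mono : is_monomial_ideal I.

Definition basis_pos : seq nat :=
  [seq p <- iota 0 n.+1 | [&& p < a, n - p < b & `[< I 'X_[mxy p (n - p)] >]]%N].

Local Notation m := (size basis_pos).
Local Notation pos i := (nth 0%N basis_pos i).

Definition basis_mnm (i : 'I_m) : 'X_{1..2} := mxy (pos i) (n - pos i).

Definition basis_coefs (f : {mpoly k[2]}) : 'cV[k]_m := \col_i f@_(basis_mnm i).

Lemma basis_pos_sorted : sorted ltn basis_pos.
Proof. by apply: sorted_filter; [exact: ltn_trans | exact: iota_ltn_sorted]. Qed.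

Lemma mem_basis_pos p :
  (p \in basis_pos) = [&& p <= n, p < a, n - p < b & `[< I 'X_[mxy p (n - p)] >]]%N.
Proof. by rewrite mem_filter mem_iota add0n ltnS andbC. Qed.

Lemma basis_pos_bounds (i : 'I_m) :
  (n.+1 - b + i <= pos i)%N /\ (pos i + (m - i) <= minn a n.+1)%N.
Proof.
apply: sorted_ltn_nth_bounds basis_pos_sorted _ (ltn_ord i).
by apply/allP => p; rewrite mem_basis_pos => /and4P [? ? ? _]; lia.
Qed.

Lemma basis_mnm_inj : injective basis_mnm.
Proof.
move=> i1 i2 /(congr1 (fun mn : 'X_{1..2} => mn ord0)); rewrite !mxy0 => eq_nth.
apply/val_inj/eqP; rewrite -(nth_uniq 0 (ltn_ord i1) (ltn_ord i2)) ?eq_nth //.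
exact: sorted_uniq ltn_trans ltnn _ basis_pos_sorted.
Qed.

Lemma basis_mnm_I i : I 'X_[basis_mnm i].
Proof. by have := mem_nth 0%N (ltn_ord i); rewrite mem_basis_pos => /and4P [_ _ _ /asboolP]. Qed.

Lemma mcoeff_notin_basis f p : I f -> (p <= n)%N -> (p < a)%N -> (n - p < b)%N ->
  p \notin basis_pos -> f@_(mxy p (n - p)) = 0.
Proof.
move=> If le_pn lt_pa lt_pb; apply: contraNeq => f_p.
rewrite mem_basis_pos le_pn lt_pa lt_pb; apply/asboolP.
by apply: (monomial_ideal_supp I_mono If); rewrite mcoeff_msupp.
Qed.

Lemma sum_basis_pos (F : nat -> k) : (forall p, (p <= n)%N -> p \notin basis_pos -> F p = 0) ->
  \sum_(p < n.+1) F p = \sum_(i < m) F (pos i).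
Proof.
move=> F0; rewrite -(big_mkord xpredT) [LHS](bigID (mem basis_pos)) /=.
rewrite [X in _ + X]big1_seq ?addr0 => [|p /andP [p_notin]]; last first.
  by rewrite mem_index_iota ltnS => /andP [_ le_pn]; apply: F0.
transitivity (\sum_(p <- basis_pos) F p); last by rewrite (big_nth 0%N) big_mkord.
rewrite big_filter /index_iota subn0 big_seq_cond [RHS]big_seq_cond; apply: eq_bigl => p.
by rewrite mem_basis_pos mem_iota ltnS; case: (p <= n)%N; rewrite ?andbF.
Qed.

Lemma basis_mnm_homog i : ('X_[basis_mnm i] : {mpoly k[2]}) \is n.-homog.
Proof.
rewrite dhomogX /= mdeg_mxy; have [_ hi_i] := basis_pos_bounds i.
by apply/eqP; have := ltn_ord i; lia.
Qed.

Lemma basis_coefs_lincomb (v : 'cV[k]_m) :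
  basis_coefs (\sum_i v i 0 *: 'X_[basis_mnm i]) = v.
Proof.
apply/matrixP => i z; rewrite ord1 !mxE raddf_sum (bigD1 i) //= mcoeffZ mcoeffX eqxx mulr1.
rewrite big1 ?addr0 // => i' ne_i'i; rewrite mcoeffZ mcoeffX.
by rewrite (inj_eq basis_mnm_inj) (negbTE ne_i'i) mulr0.
Qed.

Lemma idealJ_of_basis_coefs0 f : I f -> f \is n.-homog -> basis_coefs f = 0 -> idealJ a b f.
Proof.
move=> If f_homog coefs0; apply/(idealJ_homogP a b f_homog) => j.
have lt_j : (j < minn a n.+1 - (n.+1 - b))%N := ltn_ord j.
rewrite /stdJ_lo; set p := (n.+1 - b + j)%N.
have [p_in | p_notin] := boolP (p \in basis_pos); last first.
  by apply: (mcoeff_notin_basis If) => //; rewrite /p; lia.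
have lt_idx : (index p basis_pos < m)%N by rewrite index_mem.
have := congr1 (fun v : 'cV[k]_m => v (Ordinal lt_idx) 0) coefs0.
by rewrite !mxE /basis_mnm /= nth_index.
Qed.

Variable d : nat.
Hypothesis char0 : [pchar k] =i pred0.
Local Notation lo := (stdJ_lo b (n + d)).
Local Notation K := (stdJ_dim a b (n + d)).

Definition lefschetz_mx : 'M[k]_(K, m) :=
  pascal_mx k d (fun i => (pos i)%:Z) (fun j : 'I_K => (lo + j)%:Z).

Lemma lefschetz_mx_rank : \rank lefschetz_mx = minn K m.
Proof.
apply: pascal_mx_rank => // [i j lt_ij | i | i].
- exact: sorted_ltn_nth ltn_trans 0%N _ basis_pos_sorted i j (ltn_ord i) (ltn_ord j) lt_ij.
- by have [lo_i _] := basis_pos_bounds i; rewrite /stdJ_lo; lia.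
- by have [_ hi_i] := basis_pos_bounds i; rewrite /stdJ_dim /stdJ_lo; lia.
Qed.

Lemma mcoeff_xpyXM_basis f (j : 'I_K) : I f -> f \is n.-homog ->
  (xpy k ^+ d * f)@_(mxy (lo + j) (n + d - (lo + j))) = (lefschetz_mx *m basis_coefs f) j 0.
Proof.
move=> If f_homog; have lt_j : (j < minn a (n + d).+1 - ((n + d).+1 - b))%N := ltn_ord j.
rewrite (mcoeff_xpyXM f_homog) ?mxE; last by rewrite /stdJ_lo; lia.
rewrite (sum_basis_pos (F := fun p => (binz d ((lo + j)%:Z - p%:Z))%:R * f@_(mxy p (n - p)))).
  by apply: eq_bigr => i _; rewrite !mxE.
move=> p le_pn p_notin; rewrite /stdJ_lo in lt_j *.
have [lt_jp | le_pj] := ltnP ((n + d).+1 - b + j) p.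
  by rewrite binz_lt0 ?mul0r //; lia.
have [lt_dp | le_dp] := ltnP (p + d) ((n + d).+1 - b + j).
  by rewrite binz_gt ?mul0r //; lia.
by rewrite (mcoeff_notin_basis If) ?mulr0 //; lia.
Qed.

Lemma lefschetz_injective : (m <= K)%N ->
  mul_injective I (idealJ a b) (xpy k) d n.
Proof.
move=> le_mK f If f_homog /(idealJ_homogP a b (xpyXM_homog d f_homog)) J_lf.
have coefs0 : lefschetz_mx *m basis_coefs f = 0.
  by apply/matrixP => j z; rewrite ord1 [RHS]mxE -mcoeff_xpyXM_basis ?J_lf.
have /row_fullP [B BA] : row_full lefschetz_mx.
  by rewrite /row_full lefschetz_mx_rank (minn_idPr le_mK).
apply: idealJ_of_basis_coefs0 => //.
by rewrite -[basis_coefs f]mul1mx -BA -mulmxA coefs0 mulmx0.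
Qed.

Lemma lefschetz_surjective : (K <= m)%N ->
  mul_surjective I (idealJ a b) (xpy k) d n.
Proof.
move=> le_Km g Ig g_homog.
have /row_freeP [B AB] : row_free lefschetz_mx.
  by rewrite /row_free lefschetz_mx_rank (minn_idPl le_Km).
pose v := B *m \col_j g@_(mxy (lo + j) (n + d - (lo + j))).
pose f := \sum_i v i 0 *: ('X_[basis_mnm i] : {mpoly k[2]}).
have f_homog : f \is n.-homog by apply: rpred_sum => i _; apply/rpredZ/basis_mnm_homog.
have If : I f by apply: monomial_ideal_lincomb => // i; apply: basis_mnm_I.
exists f; split => //; apply/(idealJ_homogP a b (rpredB g_homog (xpyXM_homog d f_homog))) => j.
rewrite mcoeffB mcoeff_xpyXM_basis //.
by rewrite basis_coefs_lincomb mulmxA AB mul1mx mxE subrr.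
Qed.

End GradedPiece.

Theorem theorem3p1 (k : fieldType) (char0 : [pchar k] =i pred0)
    (a b : nat) (ha : (0 < a)%N) (hb : (0 < b)%N)
    (I : {mpoly k[2]} -> Prop)
    (hI : is_monomial_ideal I)
    (hJI : forall p, idealJ a b p -> I p) :
  quot_has_SLP I (idealJ a b).
Proof.
exists (xpy k); split => [|d i _]; first exact: xpy_homog.
have [le_mK | lt_Km] := leqP (size (basis_pos a b I i)) (stdJ_dim a b (i + d)).
  by left; apply: lefschetz_injective.
by right; apply: lefschetz_surjective => //; apply: ltnW.
Qed.
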